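(* Let $T\in\mathbb{N}$, $m\in\mathbb{N}$ and $d=2^m$. Let $\mathcal{A}$ be an action set consisting of $k$ distinct length-$m$ strings of single-qubit Pauli observables. Then for any policy $\pi$ there exists an environment $\rho\in\mathcal{S}_d$ such that $$\mathbb{E}_{\rho,\pi}\big[R_T(\mathcal{A},\rho,\pi)\big]\ge\frac{3}{100}\sqrt{(k-1)T}$$ whenever $T\ge2(k-1)$.
   Context: A length-$m$ string of single-qubit Pauli observables is an operator $P_1\otimes\cdots\otimes P_m$ on $(\mathbb{C}^2)^{\otimes m}$ with each $P_j\in\{\sigma_x,\sigma_y,\sigma_z\}$ (Pauli matrices). $\mathcal{S}_d$ is the set of density matrices on $\mathbb{C}^d$. Discrete multi-armed quantum bandit with finite action set $\mathcal{A}=\{O_1,\dots,O_k\}$ of observables: in each round $t=1,\dots,T$ the learner chooses $A_t\in[k]$ according to a policy $\pi=(\pi_t)$ (distributions on $[k]$ conditioned on past actions and rewards), measures a fresh copy of $\rho$ in the eigenbasis of $O_{A_t}$ and receives the eigenvalue outcome as reward (Born rule). Regret $R_T(\mathcal{A},\rho,\pi)=\sum_{t=1}^T(\max_{O\in\mathcal{A}}\mathrm{Tr}(\rho O)-\mathrm{Tr}(\rho O_{A_t}))$; $\mathbb{E}_{\rho,\pi}$ is expectation over the induced process. *)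

From HB Require Import structures.
From mathcomp Require Import all_boot all_order all_algebra.
From mathcomp Require Import complex.
From mathcomp Require Import reals.
Set Implicit Arguments. Unset Strict Implicit. Unset Printing Implicit Defensive.
Import Order.TTheory GRing.Theory Num.Theory.
Local Open Scope ring_scope.
Local Open Scope complex_scope.

Inductive pauli := sigma_x | sigma_y | sigma_z.

(* entries of the Pauli matrices, indexed by bits (false = |0>, true = |1>) *)
Definition pauli_entry (R : rcfType) (P : pauli) (b c : bool) : R[i] :=
  match P, b, c with
  | sigma_x, false, true => 1
  | sigma_x, true, false => 1
  | sigma_y, false, true => - 'i
  | sigma_y, true, false => 'i
  | sigma_z, false, false => 1
  | sigma_z, true, true => -1
  | _, _, _ => 0
  end.

(* j-th bit of the computational basis index i of (C^2)^{⊗ m} = C^(2^m) *)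
Definition qbit (i j : nat) : bool := odd (i %/ 2 ^ j).

(* the operator P_1 ⊗ ... ⊗ P_m on C^(2^m): Kronecker-product entries *)
Definition pauli_string (R : rcfType) (m : nat) (P : 'I_m -> pauli)
  : 'M[R[i]]_(2 ^ m) :=
  \matrix_(r, c) \prod_(j < m) pauli_entry R (P j) (qbit r j) (qbit c j).

Definition adjmx (R : rcfType) (n : nat) (A : 'M[R[i]]_n) : 'M[R[i]]_n :=
  (map_mx conjc A)^T.

Definition density (R : rcfType) (d : nat) (rho : 'M[R[i]]_d) : Prop :=
  adjmx rho = rho /\
  (forall v : 'cV[R[i]]_d, 0 <= ((map_mx conjc v)^T *m rho *m v) 0 0) /\
  \tr rho = 1.

Definition expval (R : rcfType) (d : nat) (rho O : 'M[R[i]]_d) : R :=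
  complex.Re (\tr (rho *m O)).

(* reward value of an outcome: true = eigenvalue +1, false = eigenvalue -1 *)
Definition rew (R : rcfType) (b : bool) : R := if b then 1 else -1.

(* Born rule: a Pauli string O has spectrum {+1,-1} with spectral projectors
   (I + O)/2 and (I - O)/2; probability of outcome b is Tr(rho Pi_b). *)
Definition born (R : rcfType) (d : nat) (rho O : 'M[R[i]]_d) (b : bool) : R :=
  complex.Re (\tr (rho *m ((2%:R)^-1 *: (1%:M + (rew R b)%:C *: O)))).

(* policies: distribution on actions given the past history of (action, reward) *)
Definition policy (R : rcfType) (k : nat) := seq ('I_k * bool) -> 'I_k -> R.

Definition is_policy (R : rcfType) (k : nat) (pi : policy R k) : Prop :=
  (forall h a, 0 <= pi h a) /\ (forall h, \sum_(a < k) pi h a = 1).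

Section Bandit.
Variables (R : rcfType) (m k T : nat).
Variable (A : 'I_k -> 'I_m -> pauli).
Variable (rho : 'M[R[i]]_(2 ^ m)).
Variable (pi : policy R k).

Definition mu (a : 'I_k) : R := expval rho (pauli_string R (A a)).

Definition gap (a : 'I_k) : R := \big[Num.max/mu a]_(a' < k) mu a' - mu a.

Definition traj_prob (h : T.-tuple ('I_k * bool)) : R :=
  \prod_(t < T) (pi (take t h) (tnth h t).1 *
                 born rho (pauli_string R (A (tnth h t).1)) (tnth h t).2).

Definition regret (h : T.-tuple ('I_k * bool)) : R :=
  \sum_(t < T) gap (tnth h t).1.

Definition expected_regret : R :=
  \sum_(h : T.-tuple ('I_k * bool)) traj_prob h * regret h.
End Bandit.

From HB Require Import structures.
From mathcomp Require Import all_boot all_order all_algebra.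
From mathcomp Require Import ring lra zify.
From mathcomp Require Import complex boolp reals exp.
Set Implicit Arguments. Unset Strict Implicit. Unset Printing Implicit Defensive.
Import Order.TTheory GRing.Theory Num.Theory.
Local Open Scope ring_scope.

(* A change-of-measure argument.  Let [P0] be the law of the trajectory when
   every outcome is a fair coin, and let [a] be an arm that the policy pulls
   at most [T/k] times in expectation under [P0].  For [D = sqrt (k/T) / 8]
   the matrix [rho = (1 + D O_a) / 2^m] is a state with [Tr (rho O_c) = D [c = a]],
   because Pauli strings are traceless and pairwise trace-orthogonal; its regret
   is [D (T - E_rho N_a)].  The likelihood ratio of [rho] against [P0] only
   involves the rounds where [a] is pulled, so [KL (P0 | P_rho) <= 2/3 D^2 E_0 N_a
   <= 1/96]; bounding [E_rho N_a - E_0 N_a] through the Hellinger distance then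
   gives [E_rho N_a <= 169/240 T], hence a regret of at least [71/1920 sqrt (k T)]. *)

Lemma sum_tuple_cons (V : nmodType) (X : finType) n (F : n.+1.-tuple X -> V) :
  \sum_(h : n.+1.-tuple X) F h = \sum_(x : X) \sum_(h : n.-tuple X) F [tuple of x :: h].
Proof.
rewrite (reindex (fun p : X * n.-tuple X => [tuple of p.1 :: p.2])) /=.
  by rewrite pair_big.
exists (fun t : n.+1.-tuple X => (thead t, [tuple of behead t])).
  by move=> [x h] _ /=; congr pair; apply: val_inj.
by move=> t _; rewrite [t in RHS]tuple_eta.
Qed.

Lemma sum_pair (V : nmodType) (I J : finType) (F : I * J -> V) :
  \sum_p F p = \sum_i \sum_j F (i, j).
Proof. by rewrite pair_bigA; apply: eq_bigr => -[]. Qed.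

Lemma sum_nat_double (V : nmodType) n (G : nat -> V) :
  \sum_(0 <= r < n.*2) G r = \sum_(0 <= r < n) (G r.*2 + G r.*2.+1).
Proof.
elim: n => [|n IH]; first by rewrite !big_geq.
by rewrite doubleS !big_nat_recr //= IH -addrA.
Qed.

Lemma exists_le_mean (R : realFieldType) n (F : 'I_n -> R) : (0 < n)%N ->
  exists i, F i <= (\sum_j F j) / n%:R.
Proof.
move=> n_gt0; case: (arg_minP F (isT : xpredT (Ordinal n_gt0))) => i _ Fi_min.
exists i; rewrite ler_pdivlMr ?ltr0n // -{1}[n]card_ord mulr_natr -sumr_const.
by apply: ler_sum => j _; apply: Fi_min.
Qed.

(** * Distributions of trajectories *)

Section PathProbability.
Variables (R : comNzRingType) (X : finType).
Implicit Types (W : seq X -> X -> R) (f g : X -> R).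

Definition path_prob n W (h : n.-tuple X) : R :=
  \prod_(t < n) W (take t h) (tnth h t).

Lemma path_prob_cons n W x (h : n.-tuple X) :
  path_prob W [tuple of x :: h] = W [::] x * path_prob (fun s => W (x :: s)) h.
Proof.
rewrite /path_prob big_ord_recl /= tnth0; congr (_ * _).
by apply: eq_bigr => t _; rewrite tnthS.
Qed.

Lemma path_probM n W f (h : n.-tuple X) :
  path_prob (fun s x => W s x * f x) h = path_prob W h * \prod_(t < n) f (tnth h t).
Proof. by rewrite -big_split. Qed.

Lemma sum_path_prob n W :
  (forall s, \sum_x W s x = 1) -> \sum_(h : n.-tuple X) path_prob W h = 1.
Proof.
elim: n W => [|n IH] W W1.
  rewrite (big_pred1 [tuple]) ?/path_prob ?big_ord0 // => t.
  by apply/esym/eqP/val_inj; case: t => -[].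
rewrite sum_tuple_cons -(W1 [::]); apply: eq_bigr => x _.
under eq_bigr do rewrite path_prob_cons.
by rewrite -mulr_sumr IH ?mulr1.
Qed.

Lemma expect_sum_path_cons n W g : (forall s, \sum_x W s x = 1) ->
  \sum_(h : n.+1.-tuple X) path_prob W h * \sum_(t < n.+1) g (tnth h t) =
  \sum_x W [::] x * (g x + \sum_(h : n.-tuple X)
     path_prob (fun s => W (x :: s)) h * \sum_(t < n) g (tnth h t)).
Proof.
move=> W1; rewrite sum_tuple_cons; apply: eq_bigr => x _.
have Wx1 s : \sum_y W (x :: s) y = 1 := W1 (x :: s).
rewrite -[g x]mulr1 -(sum_path_prob n Wx1) mulr_sumr -big_split mulr_sumr.
apply: eq_bigr => h _; rewrite path_prob_cons big_ord_recl tnth0.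
under eq_bigr do rewrite tnthS.
rewrite /=; ring.
Qed.

(* Tower property: each step may be replaced by its conditional expectation. *)
Lemma expect_sum_path_cond n W f g :
  (forall s, \sum_x W s x = 1) ->
  (forall s, \sum_x W s x * f x = \sum_x W s x * g x) ->
  \sum_(h : n.-tuple X) path_prob W h * \sum_(t < n) f (tnth h t) =
  \sum_(h : n.-tuple X) path_prob W h * \sum_(t < n) g (tnth h t).
Proof.
elim: n W => [|n IH] W W1 Wfg; first by apply: eq_bigr => h _; rewrite !big_ord0.
rewrite !expect_sum_path_cons //.
under eq_bigr do rewrite mulrDr; under [RHS]eq_bigr do rewrite mulrDr.
rewrite !big_split /= Wfg; congr (_ + _); apply: eq_bigr => x _.
by rewrite (IH _ (fun s => W1 (x :: s)) (fun s => Wfg (x :: s))).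
Qed.

End PathProbability.

Lemma path_prob_ge0 (R : numDomainType) (X : finType) n (W : seq X -> X -> R)
    (h : n.-tuple X) :
  (forall s x, 0 <= W s x) -> 0 <= path_prob W h.
Proof. by move=> W0; apply: prodr_ge0 => t _; apply: W0. Qed.

Section PolicyKernel.
Variables (R : comNzRingType) (k : nat).

Definition policy_kernel (pi : seq ('I_k * bool) -> 'I_k -> R) (q : 'I_k -> bool -> R) :
    seq ('I_k * bool) -> 'I_k * bool -> R :=
  fun s x => pi s x.1 * q x.1 x.2.

Lemma sum_policy_kernel pi q s :
  \sum_c pi s c = 1 -> (forall c, \sum_b q c b = 1) ->
  \sum_x policy_kernel pi q s x = 1.
Proof.
move=> pi1 q1; rewrite -pi1 sum_pair; apply: eq_bigr => c _.
by rewrite /policy_kernel /= -mulr_sumr q1 mulr1.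
Qed.

End PolicyKernel.

(** * Change of measure *)

Section RealInequalities.
Variable R : realType.
Implicit Types x y s c lam : R.

Lemma ln_le_subr1 x : 0 < x -> ln x <= x - 1.
Proof.
by move=> x0; have := @le_ln1Dx _ (x - 1); rewrite addrCA subrr addr0; apply; lra.
Qed.

Lemma oppr_ln1B_le x : 0 <= x < 1 -> - ln (1 - x) <= x / (1 - x).
Proof.
move=> /andP[x0 x1]; have x1' : 0 < 1 - x by lra.
have -> : x / (1 - x) = (1 - x)^-1 - 1 by field; lra.
by rewrite -lnV ?posrE // ln_le_subr1 // invr_gt0.
Qed.

Lemma oppr_ln1D_ln1B_le x : x ^+ 2 <= 4^-1 ->
  - (ln (1 + x) + ln (1 - x)) <= 4 / 3 * x ^+ 2.
Proof.
move=> x2_le; have [x1 x2] : 0 < 1 + x /\ 0 < 1 - x by split; nra.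
rewrite -lnM ?posrE // (_ : _ * _ = 1 - x ^+ 2); last by ring.
apply: le_trans (oppr_ln1B_le _) _; first by apply/andP; split; [apply: sqr_ge0|lra].
rewrite ler_pdivrMr; last lra.
have := sqr_ge0 x; nra.
Qed.

Lemma ln_prod n (f : 'I_n -> R) : (forall t, 0 < f t) ->
  ln (\prod_(t < n) f t) = \sum_(t < n) ln (f t).
Proof.
elim: n f => [|n IH] f f_gt0; first by rewrite !big_ord0 ln1.
by rewrite !big_ord_recr /= lnM ?posrE ?IH ?prodr_gt0.
Qed.

Lemma mul2_le_wsqr x y lam : 0 < lam -> 2 * x * y <= lam * x ^+ 2 + y ^+ 2 / lam.
Proof.
move=> lam0; have : 0 <= lam * (x - y / lam) ^+ 2 by rewrite mulr_ge0 ?sqr_ge0 ?ltW.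
have -> : lam * (x - y / lam) ^+ 2 = lam * x ^+ 2 + y ^+ 2 / lam - 2 * x * y.
  by field; rewrite gt_eqF.
lra.
Qed.

(* [s^2 - 1 = (s - 1)(s + 1)], then weighted AM-GM on the two factors. *)
Lemma mul_sqr_subr1_le s (n : R) c lam : 0 <= s -> 0 <= n <= c -> 0 < lam ->
  n * (s ^+ 2 - 1) <= c / 2 * (lam * (s - 1) ^+ 2 + (s + 1) ^+ 2 / lam).
Proof.
move=> s0 /andP[n0 nc] lam0.
have amgm := mul2_le_wsqr `|s - 1| (s + 1) lam0.
rewrite -[(s - 1) ^+ 2]real_normK ?num_real //.
have : s ^+ 2 - 1 <= `|s - 1| * (s + 1).
  by rewrite (_ : _ - 1 = (s - 1) * (s + 1)) ?ler_wpM2r ?ler_norm //; [lra | ring].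
have : 0 <= `|s - 1| * (s + 1) by rewrite mulr_ge0 //; lra.
nra.
Qed.

End RealInequalities.

Section ChangeOfMeasure.
Variables (R : realType) (H : finType) (P0 L : H -> R).
Hypotheses (P0_ge0 : forall h, 0 <= P0 h) (P0_sum1 : \sum_h P0 h = 1).
Hypotheses (L_gt0 : forall h, 0 < L h) (L_sum1 : \sum_h P0 h * L h = 1).

(* Twice the squared Hellinger distance between [P0] and [P0 * L]. *)
Definition hellinger : R := \sum_h P0 h * (Num.sqrt (L h) - 1) ^+ 2.

Lemma hellingerE : hellinger = 2 - 2 * \sum_h P0 h * Num.sqrt (L h).
Proof.
transitivity (\sum_h P0 h * L h + \sum_h P0 h - 2 * \sum_h P0 h * Num.sqrt (L h)).
  rewrite /hellinger mulr_sumr -big_split -sumrB; apply: eq_bigr => h _ /=.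
  by rewrite sqrrB sqr_sqrtr ?ltW //; ring.
by rewrite L_sum1 P0_sum1.
Qed.

Lemma hellinger_le_KL : hellinger <= \sum_h P0 h * - ln (L h).
Proof.
have sumE : \sum_h P0 h * (2 * (1 - Num.sqrt (L h))) =
    2 * \sum_h P0 h - 2 * \sum_h P0 h * Num.sqrt (L h).
  by rewrite !mulr_sumr -sumrB; apply: eq_bigr => h _; ring.
rewrite P0_sum1 mulr1 in sumE; rewrite hellingerE -sumE.
apply: ler_sum => h _; apply: ler_wpM2l => //.
have sL : 0 < Num.sqrt (L h) by rewrite sqrtr_gt0.
rewrite -{2}[L h]sqr_sqrtr ?(ltW (L_gt0 h)) // expr2 lnM ?posrE //.
have := ln_le_subr1 sL; lra.
Qed.

Lemma sum_sqrt_addr1_sqr :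
  \sum_h P0 h * (Num.sqrt (L h) + 1) ^+ 2 = 4 - hellinger.
Proof.
suff : \sum_h P0 h * (Num.sqrt (L h) + 1) ^+ 2 = 2 + 2 * \sum_h P0 h * Num.sqrt (L h).
  by move=> ->; rewrite hellingerE; ring.
transitivity (\sum_h P0 h * L h + \sum_h P0 h + 2 * \sum_h P0 h * Num.sqrt (L h)).
  rewrite mulr_sumr -!big_split; apply: eq_bigr => h _ /=.
  by rewrite sqrrD sqr_sqrtr ?ltW //; ring.
by rewrite L_sum1 P0_sum1.
Qed.

Lemma expect_density_le (N : H -> R) (c D lam : R) :
  0 <= c -> (forall h, 0 <= N h <= c) -> \sum_h P0 h * - ln (L h) <= D -> 0 < lam ->
  \sum_h P0 h * L h * N h <= \sum_h P0 h * N h + c * (lam * D + 4 / lam) / 2.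
Proof.
move=> c0 N_bound KL lam0.
have pointwise h : P0 h * L h * N h - P0 h * N h <=
    c / 2 * (lam * (P0 h * (Num.sqrt (L h) - 1) ^+ 2)
             + P0 h * (Num.sqrt (L h) + 1) ^+ 2 / lam).
  set s := Num.sqrt (L h).
  have -> : P0 h * L h * N h - P0 h * N h = P0 h * (N h * (s ^+ 2 - 1)).
    by rewrite sqr_sqrtr ?(ltW (L_gt0 h)) //; ring.
  have -> : c / 2 * (lam * (P0 h * (s - 1) ^+ 2) + P0 h * (s + 1) ^+ 2 / lam) =
      P0 h * (c / 2 * (lam * (s - 1) ^+ 2 + (s + 1) ^+ 2 / lam)) by ring.
  by rewrite ler_wpM2l // mul_sqr_subr1_le ?sqrtr_ge0.
have sum_pointwise : \sum_h (P0 h * L h * N h - P0 h * N h) <=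
    c / 2 * (lam * hellinger + (4 - hellinger) / lam).
  rewrite -sum_sqrt_addr1_sqr /hellinger mulr_sumr mulr_suml -big_split mulr_sumr.
  by apply: ler_sum => h _; apply: pointwise.
have hellinger_ge0 : 0 <= hellinger.
  by apply: sumr_ge0 => h _; rewrite mulr_ge0 ?sqr_ge0.
have hellinger_le := le_trans hellinger_le_KL KL.
rewrite sumrB lerBlDl in sum_pointwise; apply: le_trans sum_pointwise _.
rewrite lerD2l mulrAC ler_wpM2r ?invr_ge0 ?ler0n // ler_wpM2l // lerD //.
  by rewrite ler_wpM2l // ltW.
by rewrite ler_wpM2r ?invr_ge0 ?(ltW lam0) //; lra.
Qed.

End ChangeOfMeasure.

(** * Pauli strings and Pauli states *)

Lemma qbit0 r : qbit r 0 = odd r.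
Proof. by rewrite /qbit expn0 divn1. Qed.

Lemma qbitS r j : qbit r j.+1 = qbit r./2 j.
Proof. by rewrite /qbit expnS divnMA divn2. Qed.

Lemma sum_prod_qbit (V : comNzRingType) m (F : 'I_m -> bool -> V) :
  \sum_(r < 2 ^ m) \prod_(j < m) F j (qbit r j) = \prod_(j < m) \sum_b F j b.
Proof.
elim: m F => [|m IH] F; first by rewrite expn0 big_ord1 !big_ord0.
have split_bit0 r : \prod_(j < m.+1) F j (qbit r j) =
    F ord0 (odd r) * \prod_(j < m) F (lift ord0 j) (qbit r./2 j).
  by rewrite big_ord_recl qbit0; congr (_ * _); apply: eq_bigr => j _; rewrite qbitS.
rewrite -(big_mkord xpredT (fun r => \prod_(j < m.+1) F j (qbit r j))) expnS mul2n.
rewrite sum_nat_double big_mkord.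
under eq_bigr do rewrite !split_bit0 /= odd_double uphalf_double doubleK.
rewrite big_split /= -!mulr_sumr (IH (fun j => F (lift ord0 j))) big_ord_recl big_bool.
by rewrite mulrDl addrC.
Qed.

Lemma prod_qbit_eq (V : comNzRingType) m r c : (r < 2 ^ m)%N -> (c < 2 ^ m)%N ->
  \prod_(j < m) ((qbit r j == qbit c j)%:R : V) = (r == c)%:R.
Proof.
elim: m r c => [|m IH] r c.
  by rewrite expn0 big_ord0 !ltnS !leqn0 => /eqP -> /eqP ->.
rewrite expnS mul2n -!ltn_half_double => hr hc.
rewrite big_ord_recl !qbit0.
under eq_bigr do rewrite lift0 !qbitS.
rewrite IH // -natrM mulnb; congr (_ %:R); congr nat_of_bool.
apply/idP/eqP => [/andP[/eqP o /eqP h]|->]; last by rewrite !eqxx.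
by rewrite -(odd_double_half r) -(odd_double_half c) o h.
Qed.

Section PauliStrings.
Local Open Scope complex_scope.
Variable R : rcfType.
Local Notation pe := (pauli_entry R).

Lemma pauli_entry_sqr P x y :
  pe P x false * pe P false y + pe P x true * pe P true y = (x == y)%:R.
Proof.
case: P; case: x; case: y => /=; rewrite ?(mul0r, mulr0, add0r, addr0, mul1r, mulr1) //;
 rewrite ?mulrN ?mulNr ?opprK -?expr2 ?sqr_i ?sqrrN ?expr1n ?mulN1r ?opprK //.
Qed.

Lemma pauli_entry_tr P : pe P false false + pe P true true = 0.
Proof. by case: P => /=; rewrite ?addr0 ?subrr. Qed.

Lemma pauli_entry_conj P x y : (pe P x y)^* = pe P y x.
Proof.
by case: P; case: x; case: y => //=; apply/eqP; rewrite eq_complex /= ?oppr0 ?opprK ?eqxx.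
Qed.

Lemma pauli_entry_tr_mul_neq P Q : P <> Q ->
  \sum_x \sum_b pe P x b * pe Q b x = 0.
Proof.
rewrite !big_bool /=.
case: P; case: Q => //= _; rewrite ?(mul0r, mulr0, add0r, addr0, mul1r, mulr1) //;
 rewrite ?mulrN ?mulNr ?opprK ?subrr ?addrN ?mulN1r ?mulrN1 ?opprK ?addNr //.
Qed.

Lemma born_expval d (rho M : 'M[R[i]]_d) b : \tr rho = 1 ->
  born rho M b = 2^-1 * (1 + rew R b * expval rho M).
Proof.
move=> tr1; rewrite /born /expval -scalemxAr mxtraceZ mulmxDr mulmx1 -scalemxAr.
rewrite mxtraceD mxtraceZ tr1.
have -> : (2%:R : R[i])^-1 = (2^-1 : R)%:C by rewrite rmorphV ?unitfE ?pnatr_eq0 // rmorph_nat.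
by case: (\tr (rho *m M)) => x y /=; rewrite !mul0r !subr0.
Qed.

Lemma adjmxD n (M N : 'M[R[i]]_n) : adjmx (M + N) = adjmx M + adjmx N.
Proof. by rewrite /adjmx map_mxD linearD. Qed.

Lemma adjmxZ n a (M : 'M[R[i]]_n) : adjmx (a *: M) = conjc a *: adjmx M.
Proof. by rewrite /adjmx map_mxZ linearZ. Qed.

Lemma adjmx1 n : adjmx (1%:M : 'M[R[i]]_n) = 1%:M.
Proof. by rewrite /adjmx map_mx1 trmx1. Qed.

Lemma cnorm_mx_ge0 n (v : 'cV[R[i]]_n) : 0 <= ((map_mx conjc v)^T *m v) 0 0.
Proof.
by rewrite mxE; apply: sumr_ge0 => i _; rewrite !mxE mulrC mulcJ_ge0.
Qed.

Variable m : nat.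
Implicit Types P Q : 'I_m -> pauli.
Local Notation O P := (pauli_string R P).

Lemma pauli_string_mulE P Q r c :
  (O P *m O Q) r c =
  \prod_(j < m) \sum_b pe (P j) (qbit r j) b * pe (Q j) b (qbit c j).
Proof.
rewrite mxE -(sum_prod_qbit (fun j b => pe (P j) (qbit r j) b * pe (Q j) b (qbit c j))).
by apply: eq_bigr => s _; rewrite !mxE -big_split.
Qed.

Lemma pauli_string_sqr P : O P *m O P = 1%:M.
Proof.
apply/matrixP => r c; rewrite pauli_string_mulE mxE.
under eq_bigr do rewrite big_bool /= addrC pauli_entry_sqr.
by rewrite prod_qbit_eq.
Qed.

Lemma adjmx_pauli_string P : adjmx (O P) = O P.
Proof.
apply/matrixP => r c; rewrite !mxE rmorph_prod; apply: eq_bigr => j _.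
exact: pauli_entry_conj.
Qed.

Lemma mxtrace_pauli_string P : (0 < m)%N -> \tr (O P) = 0.
Proof.
case: m P => // m' P _.
rewrite /mxtrace (eq_bigr (fun r : 'I_(2 ^ m'.+1) =>
  \prod_(j < m'.+1) pe (P j) (qbit r j) (qbit r j))); last by move=> r _; rewrite mxE.
by rewrite (sum_prod_qbit (fun j x => pe (P j) x x)) big_ord_recl big_bool /= addrC
  pauli_entry_tr mul0r.
Qed.

Lemma mxtrace_pauli_string_mul_neq P Q j : P j <> Q j -> \tr (O P *m O Q) = 0.
Proof.
move=> PQj; have -> : \tr (O P *m O Q) =
    \prod_(j < m) \sum_x \sum_b pe (P j) x b * pe (Q j) b x.
  rewrite -sum_prod_qbit; apply: eq_bigr => r _; exact: pauli_string_mulE.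
by rewrite (bigD1 j) //= pauli_entry_tr_mul_neq // mul0r.
Qed.

Definition pauli_state (D : R) P : 'M[R[i]]_(2 ^ m) :=
  (2 ^ m)%:R^-1 *: (1%:M + D%:C *: O P).

Lemma pnatr_exp2_neq0 : (2 ^ m)%:R != 0 :> R[i].
Proof. by rewrite pnatr_eq0 expn_eq0. Qed.

Lemma mxtrace_pauli_state D P : (0 < m)%N || (D == 0) -> \tr (pauli_state D P) = 1.
Proof.
move=> m0_or_D0; rewrite mxtraceZ mxtraceD mxtraceZ mxtrace1.
have -> : D%:C * \tr (O P) = 0.
  by case/orP: m0_or_D0 => [/mxtrace_pauli_string ->|/eqP ->]; rewrite ?mulr0 ?mul0r.
by rewrite addr0 mulVf // pnatr_exp2_neq0.
Qed.

Lemma adjmx_pauli_state D P : adjmx (pauli_state D P) = pauli_state D P.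
Proof.
rewrite adjmxZ adjmxD adjmx1 adjmxZ adjmx_pauli_string.
congr (_ *: (_ + _ *: _)); last exact: conjc_real.
by rewrite conjc_inv conjc_nat.
Qed.

(* With [B = 1 + O P] Hermitian and [B^2 = 2 B], the state is
   [((1 - D) 1 + (D / 2) B^* B) / 2^m], a nonnegative combination of PSD matrices. *)
Lemma pauli_state_psd D P (v : 'cV[R[i]]_(2 ^ m)) : 0 <= D <= 1 ->
  0 <= ((map_mx conjc v)^T *m pauli_state D P *m v) 0 0.
Proof.
move=> /andP[D0 D1]; pose B : 'M[R[i]]_(2 ^ m) := 1%:M + O P.
have adjB : (map_mx conjc B)^T = B by rewrite -/(adjmx B) adjmxD adjmx1 adjmx_pauli_string.
have BB : B *m B = 2%:R *: B.
  rewrite mulmxDl !mulmxDr !mul1mx mulmx1 pauli_string_sqr scalerDl scale1r.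
  by rewrite addrA -addrA [O P + 1%:M]addrC.
have -> : pauli_state D P =
    (2 ^ m)%:R^-1 *: ((1 - D)%:C *: 1%:M + (D / 2)%:C *: (B *m B)).
  have D_half : (D / 2)%:C * 2 = D%:C.
    have two : (2 : R[i]) = (2 : R)%:C by rewrite rmorph_nat.
    by rewrite two -rmorphM mulfVK // pnatr_eq0.
  by rewrite BB scalerA D_half /B [D%:C *: _]scalerDr addrA -scalerDl -rmorphD subrK scale1r.
rewrite -scalemxAr -scalemxAl mxE mulr_ge0 ?invr_ge0 ?ler0n //.
rewrite mulmxDr mulmxDl -!scalemxAr -!scalemxAl mxE [X in _ + X]mxE [X in X + _]mxE.
rewrite mulmx1 addr_ge0 ?mulr_ge0 ?ler0c ?subr_ge0 ?divr_ge0 ?cnorm_mx_ge0 //.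
have -> : (map_mx conjc v)^T *m (B *m B) *m v = (map_mx conjc (B *m v))^T *m (B *m v).
  by rewrite map_mxM trmx_mul adjB !mulmxA.
exact: cnorm_mx_ge0.
Qed.

Lemma density_pauli_state D P : (0 < m)%N || (D == 0) -> 0 <= D <= 1 ->
  density (pauli_state D P).
Proof.
move=> m0_or_D0 D01; split; first exact: adjmx_pauli_state.
by split; [move=> v; apply: pauli_state_psd | apply: mxtrace_pauli_state].
Qed.

Lemma mxtrace_pauli_state_mul D P Q :
  \tr (pauli_state D P *m O Q) = (2 ^ m)%:R^-1 * (\tr (O Q) + D%:C * \tr (O P *m O Q)).
Proof. by rewrite -scalemxAl mulmxDl mul1mx -scalemxAl mxtraceZ mxtraceD mxtraceZ. Qed.

Lemma expval_pauli_state D P : (0 < m)%N -> expval (pauli_state D P) (O P) = D.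
Proof.
move=> m_gt0; rewrite /expval mxtrace_pauli_state_mul pauli_string_sqr mxtrace1.
by rewrite mxtrace_pauli_string // add0r mulrCA mulVf ?pnatr_exp2_neq0 ?mulr1.
Qed.

Lemma expval_pauli_state_neq D P Q j : (0 < m)%N -> P j <> Q j ->
  expval (pauli_state D P) (O Q) = 0.
Proof.
move=> m_gt0 PQj; rewrite /expval mxtrace_pauli_state_mul.
by rewrite (mxtrace_pauli_string_mul_neq PQj) mxtrace_pauli_string // mulr0 addr0 mulr0.
Qed.

End PauliStrings.

(** * The hard instances *)

Section PauliBandit.
Variables (R : realType) (m k T : nat) (A : 'I_k -> 'I_m -> pauli).
Hypothesis A_inj : injective A.
Variable pi : policy R k.
Hypothesis pi_ok : is_policy pi.

Local Notation history := (T.-tuple ('I_k * bool)).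

Definition round_ratio (a : 'I_k) (D : R) (x : 'I_k * bool) : R :=
  1 + rew R x.2 * (D * (x.1 == a)%:R).

Definition outcome_law (a : 'I_k) (D : R) (c : 'I_k) (b : bool) : R :=
  2^-1 * round_ratio a D (c, b).

Definition null_prob (h : history) : R :=
  path_prob (policy_kernel pi (fun _ _ => 2^-1)) h.

Definition arm_prob (a : 'I_k) (D : R) (h : history) : R :=
  path_prob (policy_kernel pi (outcome_law a D)) h.

Definition arm_count (a : 'I_k) (h : history) : R :=
  \sum_(t < T) ((tnth h t).1 == a)%:R.

Definition likelihood_ratio (a : 'I_k) (D : R) (h : history) : R :=
  \prod_(t < T) round_ratio a D (tnth h t).

(* [KL (Bernoulli (1/2) | Bernoulli ((1 + D) / 2))] *)
Definition kl_coin (D : R) : R := - (ln (1 + D) + ln (1 - D)) / 2.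

Lemma arm_count_bounds a h : 0 <= arm_count a h <= T%:R.
Proof.
rewrite sumr_ge0 => [|t _]; last exact: ler0n.
rewrite -[T in T%:R]card_ord -sumr_const; apply: ler_sum => t _.
by rewrite lern1 leq_b1.
Qed.

Lemma sum_arm_count h : \sum_a arm_count a h = T%:R.
Proof.
rewrite exchange_big /= -[T in T%:R]card_ord -sumr_const; apply: eq_bigr => t _.
rewrite (bigD1 (tnth h t).1) //= eqxx big1 ?addr0 // => c.
by rewrite eq_sym => /negbTE ->.
Qed.

Lemma null_prob_ge0 h : 0 <= null_prob h.
Proof.
by apply: path_prob_ge0 => s x; rewrite mulr_ge0 ?invr_ge0 ?ler0n //; case: pi_ok.
Qed.

Lemma sum_null_prob : \sum_h null_prob h = 1.
Proof.
apply: sum_path_prob => s; apply: sum_policy_kernel => [|c]; first by case: pi_ok.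
by rewrite big_bool /=; field.
Qed.

Lemma sum_arm_prob a (D : R) : \sum_h arm_prob a D h = 1.
Proof.
apply: sum_path_prob => s; apply: sum_policy_kernel => [|c]; first by case: pi_ok.
by rewrite big_bool /outcome_law /round_ratio /=; field.
Qed.

Lemma sum_expected_arm_count : \sum_a \sum_h null_prob h * arm_count a h = T%:R.
Proof.
transitivity (\sum_h null_prob h * T%:R); last by rewrite -mulr_suml sum_null_prob mul1r.
rewrite exchange_big; apply: eq_bigr => h _.
by rewrite -mulr_sumr sum_arm_count.
Qed.

Lemma arm_probE a (D : R) h : arm_prob a D h = null_prob h * likelihood_ratio a D h.
Proof.
rewrite /null_prob /likelihood_ratio -path_probM.
by apply: eq_bigr => t _; rewrite /policy_kernel /outcome_law mulrA.
Qed.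

Lemma round_ratio_gt0 a (D : R) x : D ^+ 2 <= 4^-1 -> 0 < round_ratio a D x.
Proof.
by move=> D2_le; case: x => c []; rewrite /round_ratio /=; case: (c == a); rewrite ?mulr1 ?mulr0 ?mul1r ?mulN1r; nra.
Qed.

Lemma likelihood_ratio_gt0 a (D : R) h : D ^+ 2 <= 4^-1 -> 0 < likelihood_ratio a D h.
Proof. by move=> D2_le; apply: prodr_gt0 => t _; apply: round_ratio_gt0. Qed.

Lemma null_expect_ln_round_ratio a (D : R) c :
  \sum_b 2^-1 * - ln (round_ratio a D (c, b)) = kl_coin D * (c == a)%:R.
Proof.
rewrite big_bool /kl_coin /round_ratio /=; case: (c == a).
  by rewrite !mulr1 mul1r mulN1r; field.
by rewrite !mulr0 addr0 ln1; field.
Qed.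

Lemma KL_likelihood_ratio_le a (D : R) : D ^+ 2 <= 4^-1 ->
  \sum_h null_prob h * - ln (likelihood_ratio a D h) <=
  2 / 3 * D ^+ 2 * \sum_h null_prob h * arm_count a h.
Proof.
move=> D2_le; have lnE h : - ln (likelihood_ratio a D h) =
    \sum_(t < T) (fun x => - ln (round_ratio a D x)) (tnth h t).
  by rewrite /likelihood_ratio ln_prod ?sumrN // => t; apply: round_ratio_gt0.
under eq_bigr do rewrite lnE.
rewrite /null_prob (expect_sum_path_cond _ _ (f := fun x => - ln (round_ratio a D x))
  (g := fun x => kl_coin D * (x.1 == a)%:R)).
- rewrite mulr_sumr; apply: ler_sum => h _; rewrite -!mulr_sumr mulrCA.
  have /andP[N_ge0 _] := arm_count_bounds a h.
  apply: ler_wpM2r; first by rewrite mulr_ge0 ?null_prob_ge0.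
  by have := oppr_ln1D_ln1B_le D2_le; rewrite /kl_coin; lra.
- by move=> s; apply: sum_policy_kernel => [|c]; [case: pi_ok | rewrite big_bool /=; field].
move=> s; rewrite !sum_pair; apply: eq_bigr => c _; rewrite /policy_kernel /=.
transitivity (pi s c * \sum_b 2^-1 * - ln (round_ratio a D (c, b))).
  by rewrite mulr_sumr; apply: eq_bigr => b _; rewrite mulrA.
by rewrite null_expect_ln_round_ratio big_bool /=; field.
Qed.

Lemma expected_arm_count_le a (D : R) (lam : R) : D ^+ 2 <= 4^-1 -> 0 < lam ->
  \sum_h arm_prob a D h * arm_count a h <=
  \sum_h null_prob h * arm_count a h +
  T%:R * (lam * (2 / 3 * D ^+ 2 * \sum_h null_prob h * arm_count a h) + 4 / lam) / 2.
Proof.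
move=> D2_le lam_gt0; under eq_bigr do rewrite arm_probE.
have L_sum1 : \sum_h null_prob h * likelihood_ratio a D h = 1.
  by rewrite -(sum_arm_prob a D); apply: eq_bigr => h _; rewrite arm_probE.
apply: (expect_density_le null_prob_ge0 sum_null_prob _ L_sum1 (ler0n _ _)).
- by move=> h; apply: likelihood_ratio_gt0.
- exact: arm_count_bounds.
- exact: KL_likelihood_ratio_le.
- exact: lam_gt0.
Qed.

Lemma nqubits_gt0 : (1 < k)%N -> (0 < m)%N.
Proof.
rewrite lt0n => k_gt1; apply/negP => /eqP m0.
suff /A_inj/(congr1 val) : A (Ordinal (ltnW k_gt1)) = A (Ordinal k_gt1) by [].
by apply: funext => j; have := ltn_ord j; rewrite {2}m0.
Qed.

Lemma mu_pauli_state a (D : R) c : (0 < m)%N ->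
  mu A (pauli_state D (A a)) c = D * (c == a)%:R.
Proof.
move=> m_gt0; have [->|c_neq_a] := eqVneq c a; first by rewrite /mu mulr1 expval_pauli_state.
have [j Aj_neq] : exists j, A a j <> A c j.
  apply/existsNP => Aac; move/eqP: c_neq_a; apply; apply: A_inj.
  by apply: funext => j; rewrite Aac.
by rewrite /mu (expval_pauli_state_neq _ m_gt0 Aj_neq) mulr0.
Qed.

Lemma gap_pauli_state a (D : R) c : (0 < m)%N -> 0 <= D ->
  gap A (pauli_state D (A a)) c = D - D * (c == a)%:R.
Proof.
move=> m_gt0 D_ge0; rewrite /gap [X in _ - X]mu_pauli_state //; congr (_ - _).
have mu_le i : mu A (pauli_state D (A a)) i <= D.
  by rewrite mu_pauli_state // ler_piMr // lern1 leq_b1.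
apply/le_anti; rewrite bigmax_le //=.
have := le_bigmax (mu A (pauli_state D (A a)) c) (mu A (pauli_state D (A a))) a.
by rewrite [X in X <= _]mu_pauli_state // eqxx mulr1.
Qed.

Lemma traj_prob_pauli_state a (D : R) h : (0 < m)%N ->
  traj_prob A (pauli_state D (A a)) pi h = arm_prob a D h.
Proof.
move=> m_gt0; apply: eq_bigr => t _; congr (_ * _).
by rewrite born_expval ?mxtrace_pauli_state ?m_gt0 // -/(mu _ _ _) mu_pauli_state.
Qed.

Lemma regret_pauli_state a (D : R) h : (0 < m)%N -> 0 <= D ->
  regret A (pauli_state D (A a)) h = D * (T%:R - arm_count a h).
Proof.
move=> m_gt0 D_ge0; rewrite /regret; under eq_bigr do rewrite gap_pauli_state //.
by rewrite sumrB sumr_const card_ord -mulr_sumr mulrBr mulr_natr.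
Qed.

Lemma expected_regret_pauli_state a (D : R) : (0 < m)%N -> 0 <= D ->
  expected_regret T A (pauli_state D (A a)) pi =
  D * (T%:R - \sum_h arm_prob a D h * arm_count a h).
Proof.
move=> m_gt0 D_ge0; rewrite /expected_regret.
under eq_bigr do rewrite traj_prob_pauli_state // regret_pauli_state // mulrCA mulrBr.
by rewrite -mulr_sumr sumrB -mulr_suml sum_arm_prob mul1r.
Qed.

Lemma expected_regret_single_arm rho : (k <= 1)%N -> expected_regret T A rho pi = 0.
Proof.
move=> k_le1; apply: big1 => h _; rewrite /regret big1 ?mulr0 // => t _.
set c := (tnth h t).1; apply/eqP; rewrite subr_eq0; apply/eqP/le_anti.
rewrite bigmax_ge_id andbT; apply: bigmax_le => // i _.
by have -> : i = c by apply: ord_inj; have := ltn_ord i; have := ltn_ord c; lia.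
Qed.

End PauliBandit.

Arguments arm_count {R k T}.

Section HardGap.
Variable R : realType.
Implicit Types k T : R.

Definition hard_gap k T : R := Num.sqrt (k * T) / (8 * T).

Lemma hard_gap_ge0 k T : 0 <= k -> 0 <= T -> 0 <= hard_gap k T.
Proof. by move=> k0 T0; rewrite divr_ge0 ?sqrtr_ge0 ?mulr_ge0. Qed.

Lemma sqr_hard_gap k T : 0 <= k -> 0 < T -> hard_gap k T ^+ 2 = k / (64 * T).
Proof.
move=> k0 T0; rewrite expr_div_n sqr_sqrtr ?mulr_ge0 ?(ltW T0) //.
by field; rewrite gt_eqF.
Qed.

Lemma sqr_hard_gap_le k T : 0 <= k -> k <= T -> 0 < T -> hard_gap k T ^+ 2 <= 4^-1.
Proof. by move=> k0 kT T0; rewrite sqr_hard_gap // ler_pdivrMr; lra. Qed.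

Lemma hard_gap_regret_ge k T N0 N1 : 2 <= k -> k <= T -> N0 <= T / k ->
  N1 <= N0 + T * (20 * (2 / 3 * hard_gap k T ^+ 2 * N0) + 4 / 20) / 2 ->
  3 / 100 * Num.sqrt ((k - 1) * T) <= hard_gap k T * (T - N1).
Proof.
move=> k2 kT N0_le N1_le; have T0 : 0 < T by lra.
have N0_half : N0 <= T / 2.
  by apply: le_trans N0_le _; rewrite ler_pM2l // lef_pV2 ?posrE //; lra.
have KL_le : 2 / 3 * hard_gap k T ^+ 2 * N0 <= 96^-1.
  rewrite sqr_hard_gap //; last lra.
  rewrite -ler_pdivlMl; last by rewrite mulr_gt0 ?divr_gt0 //; lra.
  by apply: le_trans N0_le _; rewrite [X in _ <= X](_ : _ = T / k) //; field; lra.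
have gap_T : hard_gap k T * T = Num.sqrt (k * T) / 8 by rewrite /hard_gap; field; lra.
have sqrt_le : Num.sqrt ((k - 1) * T) <= Num.sqrt (k * T).
  by rewrite ler_wsqrtr // ler_wpM2r; lra.
have bias_le : T * (20 * (2 / 3 * hard_gap k T ^+ 2 * N0) + 4 / 20) / 2 <=
    T * (20 * 96^-1 + 4 / 20) / 2.
  by rewrite ler_pM2r ?invr_gt0 // ler_pM2l // lerD2r ler_pM2l.
have : T * (71 / 240) <= T - N1 by lra.
have k0 : 0 <= k by lra.
move/(ler_wpM2l (hard_gap_ge0 k0 (ltW T0))); rewrite mulrA gap_T.
have := sqrtr_ge0 (k * T); lra.
Qed.

End HardGap.

Theorem mainTheorem6 (R : realType) (T m k : nat)
  (A : 'I_k -> 'I_m -> pauli) (A_distinct : injective A)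
  (pi : policy R k) (pi_ok : is_policy pi) :
  (2 * (k - 1) <= T)%N ->
  exists rho : 'M[R[i]]_(2 ^ m),
    density rho /\
    @expected_regret R m k T A rho pi >= (3%:R / 100%:R) * Num.sqrt ((k - 1)%N%:R * T%:R).
Proof.
move=> T_ge; have [k_le1|k_gt1] := leqP k 1.
  exists (pauli_state 0 (fun=> sigma_x)); split.
    by apply: density_pauli_state; rewrite ?eqxx ?orbT ?lexx ?ler01.
  rewrite expected_regret_single_arm // (_ : (k - 1)%N = 0%N); last lia.
  by rewrite mul0r sqrtr0 mulr0.
have m_gt0 := nqubits_gt0 A_distinct k_gt1.
have [a Na_le] := exists_le_mean
  (fun a => \sum_(h : T.-tuple _) null_prob pi h * arm_count a h) (ltnW k_gt1).
rewrite /= sum_expected_arm_count // in Na_le.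
have [k_ge2 k_leT] : 2 <= k%:R :> R /\ k%:R <= T%:R :> R by rewrite !ler_nat; split; lia.
have T_gt0 : 0 < T%:R :> R by rewrite ltr0n; lia.
have k_ge0 : 0 <= k%:R :> R := ler0n _ _.
set D : R := hard_gap k%:R T%:R.
have D2_le : D ^+ 2 <= 4^-1 := sqr_hard_gap_le k_ge0 k_leT T_gt0.
have D_ge0 : 0 <= D := hard_gap_ge0 k_ge0 (ltW T_gt0).
exists (pauli_state D (A a)); split.
  by apply: density_pauli_state; rewrite ?m_gt0 // D_ge0 /=; nra.
rewrite expected_regret_pauli_state // natrB; last lia.
apply: hard_gap_regret_ge k_ge2 k_leT Na_le _.
have lam_gt0 : 0 < 20 :> R by lra.
exact (expected_arm_count_le T pi_ok a D2_le lam_gt0).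
Qed.
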